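(* In the two-period, four-sequence crossover design ($\mathcal{S}^{\mathrm{obs}}=\{AA,AB,BA,BB\}$, all $N_{\vec z}\ge1$) under complete randomization, suppose Assumption 1 holds and Assumptions 2 and 3 hold with $k=1$, so that $\tau_1=\tau_2(A)=\tau_2(B)=:\tau$. Then the BLUE of $\tau$ is $\widehat\tau=\sum_{t=1}^2\sum_{\vec z\in\mathcal{S}^{\mathrm{obs}}}\tilde w^*_t(\vec z)\widehat Y_t(\vec z)$, where the weights $\tilde w^*$ minimize $$f(\tilde w)=\sum_{z_1\in\{A,B\}}\Big\{\tfrac{\tilde w_1(z_1A)^2}{N_{z_1A}}+\tfrac{\tilde w_1(z_1B)^2}{N_{z_1B}}\Big\}S_1^2(z_1)+\sum_{z_2\in\{A,B\}}\Big\{\tfrac{\tilde w_2(Az_2)^2}{N_{Az_2}}+\tfrac{\tilde w_2(Bz_2)^2}{N_{Bz_2}}\Big\}S_2^2(z_2)+\sum_{z_1,z_2\in\{A,B\}}\tfrac{2\tilde w_1(z_1z_2)\tilde w_2(z_1z_2)S_{12}(z_1z_2)}{N_{z_1z_2}}$$ subject to the linear constraints $\tilde w_1(AA)+\tilde w_1(AB)+\tilde w_1(BA)+\tilde w_1(BB)=0$, $\tilde w_2(AA)+\tilde w_2(AB)+\tilde w_2(BA)+\tilde w_2(BB)=0$, and $\tilde w_1(AA)+\tilde w_1(AB)+\tilde w_2(AA)+\tilde w_2(BA)=1$.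
   Context: Setup: $N$ units, treatments $A,B$, $T$ periods; sequences $\vec z\in\{A,B\}^T$, $\vec z_{[t_1,t_2]}=z_{t_1}\cdots z_{t_2}$. Complete randomization with fixed positive group sizes $N_{\vec z}$ for $\vec z\in\mathcal{S}^{\mathrm{obs}}$; fixed potential outcomes $Y_{it}(\vec z)$, observed $Y_{it}=Y_{it}(\vec Z_i)$; randomness only from assignment. $\bar Y_t(\vec z)=N^{-1}\sum_iY_{it}(\vec z)$, $\widehat Y_t(\vec z)=N_{\vec z}^{-1}\sum_iY_{it}\mathbf1(\vec Z_i=\vec z)$. Assumption 1: $Y_{it}(\vec z)=Y_{it}(\vec z')$ whenever $\vec z_{[1,t]}=\vec z'_{[1,t]}$. Assumption 2 (order $k$): $Y_{it}(\vec z)=Y_{it}(\vec z')$ whenever $\vec z_{[\max(1,t-k+1),t]}=\vec z'_{[\max(1,t-k+1),t]}$; then $Y_{it}$ is a function $Y_{it}(a)$ of the window $a=\vec z_{[t-k+1,t]}$ for $t\ge k$. Assumption 3 (order $k$, requires Assumption 2 with same $k$): for all $a,b\in\{A,B\}^k$ and all $t'>t\ge k$, $Y_{it}(a)-Y_{it}(b)=Y_{it'}(a)-Y_{it'}(b)$. For $k=1,T=2$ this says $Y_{i1}(A)-Y_{i1}(B)=Y_{i2}(A)-Y_{i2}(B)$. Estimands: $\tau_1=\bar Y_1(A)-\bar Y_1(B)$, $\tau_2(z_1)=\bar Y_2(z_1A)-\bar Y_2(z_1B)$. Variance notation (divisor $N-1$): $S_t^2(\vec z)=\frac1{N-1}\sum_i\{Y_{it}(\vec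 z)-\bar Y_t(\vec z)\}^2$, $S_{12}(\vec z)=\frac1{N-1}\sum_i\{Y_{i1}(\vec z)-\bar Y_1(\vec z)\}\{Y_{i2}(\vec z)-\bar Y_2(\vec z)\}$; $S_1^2(z_1)$ denotes the common value $S_1^2(z_1A)=S_1^2(z_1B)$ and $S_2^2(z_2)$ the common value $S_2^2(Az_2)=S_2^2(Bz_2)$ (equal under the assumptions). A linear estimator is $\sum_{t}\sum_{\vec z\in\mathcal{S}^{\mathrm{obs}}}\tilde w_t(\vec z)\widehat Y_t(\vec z)$ with non-random weights; unbiased means expectation equals the estimand for every finite population satisfying the assumptions; BLUE means unbiased with variance, for the given population, no larger than any other unbiased linear estimator. *)

From HB Require Import structures.
From mathcomp Require Import all_boot all_order all_algebra.
Set Implicit Arguments. Unset Strict Implicit. Unset Printing Implicit Defensive.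
Import Order.TTheory GRing.Theory Num.Theory.
Local Open Scope ring_scope.

Notation trA := true.
Notation trB := false.
Definition tseq := (bool * bool)%type.

Definition p1 : 'I_2 := @Ordinal 2 0 isT.
Definition p2 : 'I_2 := @Ordinal 2 1 isT.

Definition trt_at (z : tseq) (t : 'I_2) : bool := if val t == 0%N then z.1 else z.2.

Section Design.
Variable R : realFieldType.
Variable N : nat.
Variable Nz : tseq -> nat.

Definition pot_outcomes := 'I_N -> 'I_2 -> tseq -> R.

Definition assumption1 (Y : pot_outcomes) : Prop :=
  forall i (z z' : tseq), z.1 = z'.1 -> Y i p1 z = Y i p1 z'.

Definition assumption2_k1 (Y : pot_outcomes) : Prop :=
  forall i t (z z' : tseq), trt_at z t = trt_at z' t -> Y i t z = Y i t z'.

(* Assumption 3 with k = 1 (T = 2): for windows a b,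
   Y_{i1}(a) - Y_{i1}(b) = Y_{i2}(a) - Y_{i2}(b), where Y_{it}(a) is the
   value at any sequence whose period-t entry is a. *)
Definition assumption3_k1 (Y : pot_outcomes) : Prop :=
  forall i (a b : bool) (z z' u u' : tseq),
    z.1 = a -> z'.1 = b -> u.2 = a -> u'.2 = b ->
    Y i p1 z - Y i p1 z' = Y i p2 u - Y i p2 u'.

Definition assumptions (Y : pot_outcomes) : Prop :=
  [/\ assumption1 Y, assumption2_k1 Y & assumption3_k1 Y].

(* Complete randomization: uniform over assignments with fixed group sizes. *)
Definition assignments : {set {ffun 'I_N -> tseq}} :=
  [set Z : {ffun 'I_N -> tseq} | [forall z : tseq, #|[set i : 'I_N | Z i == z]| == Nz z]].

Definition Expect (X : {ffun 'I_N -> tseq} -> R) : R :=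
  (#|assignments|%:R)^-1 * \sum_(Z in assignments) X Z.

Definition Var (X : {ffun 'I_N -> tseq} -> R) : R :=
  Expect (fun Z => (X Z - Expect X) ^+ 2).

Definition Ybar (Y : pot_outcomes) (t : 'I_2) (z : tseq) : R :=
  (N%:R)^-1 * \sum_(i < N) Y i t z.

Definition Yhat (Y : pot_outcomes) (t : 'I_2) (z : tseq)
    (Z : {ffun 'I_N -> tseq}) : R :=
  ((Nz z)%:R)^-1 * \sum_(i < N) Y i t (Z i) * (Z i == z)%:R.

(* weights \tilde w_t(z), over S^obs = {AA, AB, BA, BB} = all of tseq *)
Definition weights := 'I_2 -> tseq -> R.

Definition lin_est (Y : pot_outcomes) (w : weights) (Z : {ffun 'I_N -> tseq}) : R :=
  \sum_(t < 2) \sum_(z : tseq) w t z * Yhat Y t z Z.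

(* estimand tau = tau_1 = \bar Y_1(A) - \bar Y_1(B) (representatives AA, BA;
   by Assumption 1 any representatives give the same value) *)
Definition tau (Y : pot_outcomes) : R := Ybar Y p1 (trA, trA) - Ybar Y p1 (trB, trA).

Definition unbiased (w : weights) : Prop :=
  forall Y' : pot_outcomes, assumptions Y' -> Expect (lin_est Y' w) = tau Y'.

Definition BLUE (Y : pot_outcomes) (w : weights) : Prop :=
  unbiased w /\
  forall w' : weights, unbiased w' -> Var (lin_est Y w) <= Var (lin_est Y w').

Definition S2 (Y : pot_outcomes) (t : 'I_2) (z : tseq) : R :=
  ((N.-1)%:R)^-1 * \sum_(i < N) (Y i t z - Ybar Y t z) ^+ 2.

Definition S12 (Y : pot_outcomes) (z : tseq) : R :=
  ((N.-1)%:R)^-1 *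
    \sum_(i < N) (Y i p1 z - Ybar Y p1 z) * (Y i p2 z - Ybar Y p2 z).

Definition S2_1 (Y : pot_outcomes) (z1 : bool) : R := S2 Y p1 (z1, trA).
Definition S2_2 (Y : pot_outcomes) (z2 : bool) : R := S2 Y p2 (trA, z2).

Definition Nr (z : tseq) : R := (Nz z)%:R.

Definition f_obj (Y : pot_outcomes) (w : weights) : R :=
  \sum_(z1 : bool)
     ((w p1 (z1, trA)) ^+ 2 / Nr (z1, trA) + (w p1 (z1, trB)) ^+ 2 / Nr (z1, trB))
       * S2_1 Y z1
  + \sum_(z2 : bool)
     ((w p2 (trA, z2)) ^+ 2 / Nr (trA, z2) + (w p2 (trB, z2)) ^+ 2 / Nr (trB, z2))
       * S2_2 Y z2
  + \sum_(z1 : bool) \sum_(z2 : bool)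
      2 * w p1 (z1, z2) * w p2 (z1, z2) * S12 Y (z1, z2) / Nr (z1, z2).

Definition constraints (w : weights) : Prop :=
  [/\ w p1 (trA, trA) + w p1 (trA, trB) + w p1 (trB, trA) + w p1 (trB, trB) = 0,
      w p2 (trA, trA) + w p2 (trA, trB) + w p2 (trB, trA) + w p2 (trB, trB) = 0 &
      w p1 (trA, trA) + w p1 (trA, trB) + w p2 (trA, trA) + w p2 (trB, trA) = 1].

End Design.

From HB Require Import structures.
From mathcomp Require Import all_boot all_order all_algebra all_fingroup.
From mathcomp Require Import ring lra zify.
(* Every linear estimator is a sum over units of a contribution depending only on
   the unit's own sequence.  Under no carryover and constant effects, the three
   linear constraints make the weights applied to the potential outcomes of any
   single unit return exactly its individual effect; averaging over units gives
   unbiasedness, while three homogeneous populations show that unbiasedness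
   forces the constraints.  For contributions centred in every group, the
   permutation symmetry of complete randomization gives the classical
   finite-population variance formula.  Applied to the centred outcomes, its
   cross term is again built from individual effects, so it does not depend on
   the weights: Var = f(w) - S_tau^2 / N for every unbiased estimator, and
   minimizing the variance is minimizing f under the constraints. *)

Set Implicit Arguments. Unset Strict Implicit. Unset Printing Implicit Defensive.
Import Order.TTheory GRing.Theory Num.Theory.
Local Open Scope ring_scope.

Lemma sum_indicator_eq (R : pzRingType) (T : finType) (x : T) (K : T -> R) :
  \sum_(z : T) (x == z)%:R * K z = K x.
Proof.
rewrite (bigD1 x) //= eqxx mul1r big1 ?addr0 // => z nz.
by rewrite eq_sym (negbTE nz) mul0r.
Qed.

Lemma sqr_sum_ord (R : pzRingType) n (u : 'I_n -> R) :
  (\sum_(i < n) u i) ^+ 2 = \sum_(i < n) (u i ^+ 2 + \sum_(j < n | j != i) u i * u j).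
Proof.
rewrite expr2 big_distrl /=; apply: eq_bigr => i _.
by rewrite big_distrr /= (bigD1 i) //= expr2.
Qed.

Lemma sum_tseq (R : nmodType) (F : tseq -> R) :
  \sum_(z : tseq) F z = F (trA, trA) + F (trA, trB) + F (trB, trA) + F (trB, trB).
Proof.
rewrite (eq_bigr (fun z => F (z.1, z.2))); last by case.
by rewrite -(pair_bigA _ (fun a b => F (a, b))) /= !big_bool /= !addrA.
Qed.

Lemma sum_I2 (R : nmodType) (F : 'I_2 -> R) : \sum_(t < 2) F t = F p1 + F p2.
Proof. by rewrite big_ord_recr big_ord1; congr (F _ + F _); apply: val_inj. Qed.

Section CompleteRandomization.
Variables (R : realFieldType) (N : nat) (Nz : tseq -> nat).
Local Notation Omega := (assignments N Nz).

Lemma perm_assignments (s : {perm 'I_N}) (Z : {ffun 'I_N -> tseq}) :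
  ([ffun i => Z (s i)] \in Omega) = (Z \in Omega).
Proof.
rewrite !inE; apply: eq_forallb => z; congr (_ == _).
rewrite -(card_preimset [set i | Z i == z] (@perm_inj _ s)).
by apply: eq_card => i; rewrite !inE ffunE.
Qed.

Lemma sum_assignments_perm (s : {perm 'I_N}) (F : {ffun 'I_N -> tseq} -> R) :
  \sum_(Z in Omega) F Z = \sum_(Z in Omega) F [ffun i => Z (s i)].
Proof.
rewrite (reindex (fun Z : {ffun 'I_N -> tseq} => [ffun i => Z (s i)])) /=.
  by apply: eq_bigl => Z; rewrite perm_assignments.
apply: onW_bij; exists (fun Z : {ffun 'I_N -> tseq} => [ffun i => Z ((s^-1)%g i)]) => Z;
  by apply/ffunP => i; rewrite !ffunE ?permK ?permKV.
Qed.

Lemma sum_group_indicator z (Z : {ffun 'I_N -> tseq}) :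
  Z \in Omega -> \sum_(i < N) ((Z i == z)%:R : R) = (Nz z)%:R.
Proof.
rewrite inE => /forallP /(_ z) /eqP <-.
rewrite (eq_bigr (fun i => if Z i == z then 1 else 0)); last by move=> i _; case: eqP.
by rewrite -big_mkcond sumr_const; congr (_ *+ _); apply: eq_card => i; rewrite !inE.
Qed.

(* Exchangeability: every unit is in group z for the same number of assignments. *)
Lemma count_unit_in_group (i : 'I_N) z :
  N%:R * \sum_(Z in Omega) ((Z i == z)%:R : R) = #|Omega|%:R * (Nz z)%:R.
Proof.
have unit_free j : \sum_(Z in Omega) ((Z i == z)%:R : R) =
                   \sum_(Z in Omega) ((Z j == z)%:R : R).
  by rewrite (sum_assignments_perm (tperm i j)); apply: eq_bigr => Z _; rewrite ffunE tpermL.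
transitivity (\sum_(j < N) \sum_(Z in Omega) ((Z j == z)%:R : R)).
  by rewrite (eq_bigr _ (fun j _ => esym (unit_free j))) sumr_const card_ord mulr_natl.
rewrite exchange_big (eq_bigr (fun _ => (Nz z)%:R)) => [|Z HZ]; last exact: sum_group_indicator.
by rewrite sumr_const mulr_natl.
Qed.

Lemma count_units_in_groups (i j : 'I_N) z z' : i != j ->
  (N.-1)%:R * \sum_(Z in Omega) ((Z i == z)%:R * (Z j == z')%:R : R) =
  ((Nz z')%:R - (z == z')%:R) * \sum_(Z in Omega) ((Z i == z)%:R : R).
Proof.
move=> nij.
have unit_free k : k != i -> \sum_(Z in Omega) ((Z i == z)%:R * (Z j == z')%:R : R) =
                             \sum_(Z in Omega) ((Z i == z)%:R * (Z k == z')%:R : R).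
  move=> nki; rewrite (sum_assignments_perm (tperm j k)); apply: eq_bigr => Z _.
  by rewrite !ffunE tpermL tpermD // eq_sym.
transitivity (\sum_(k | k != i) \sum_(Z in Omega) ((Z i == z)%:R * (Z k == z')%:R : R)).
  rewrite (eq_bigr _ (fun k nki => esym (unit_free k nki))) sumr_const mulr_natl.
  by congr (_ *+ _); rewrite -[in LHS](card_ord N) -(cardC1 i); apply: eq_card.
rewrite exchange_big mulr_sumr; apply: eq_bigr => Z HZ.
rewrite -mulr_sumr -(sum_group_indicator z' HZ) [in RHS](bigD1 i) //=.
case: (eqVneq (Z i) z) => [->|_]; last by rewrite mul0r mulr0.
by rewrite mul1r mulr1 addrAC subrr add0r.
Qed.

Lemma sum_assignments_unit (i : 'I_N) (G : tseq -> R) :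
  N%:R * \sum_(Z in Omega) G (Z i) = #|Omega|%:R * \sum_(z : tseq) G z * (Nz z)%:R.
Proof.
under eq_bigr => Z _ do rewrite -(sum_indicator_eq (Z i) G).
rewrite exchange_big !mulr_sumr; apply: eq_bigr => z _.
by rewrite -mulr_suml mulrA count_unit_in_group; ring.
Qed.

Lemma sum_assignments_pair (i j : 'I_N) (G H : tseq -> R) : i != j ->
  (N.-1)%:R * (N%:R * \sum_(Z in Omega) G (Z i) * H (Z j)) =
  #|Omega|%:R * \sum_(z : tseq) \sum_(z' : tseq)
     G z * H z' * ((Nz z)%:R * ((Nz z')%:R - (z == z')%:R)).
Proof.
move=> nij.
rewrite (eq_bigr (fun Z : {ffun 'I_N -> tseq} => \sum_(z : tseq) \sum_(z' : tseq)
    ((Z i == z)%:R * (Z j == z')%:R) * (G z * H z'))); last first.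
  move=> Z _; rewrite -(sum_indicator_eq (Z i) G) mulr_suml; apply: eq_bigr => z _.
  rewrite -(sum_indicator_eq (Z j) H) mulr_sumr; apply: eq_bigr => z' _; ring.
rewrite exchange_big !mulr_sumr; apply: eq_bigr => z _.
rewrite exchange_big !mulr_sumr; apply: eq_bigr => z' _.
rewrite -mulr_suml.
set S := \sum_(Z in Omega) _.
transitivity ((N.-1)%:R * S * N%:R * (G z * H z')); first by ring.
rewrite count_units_in_groups // -(mulrA _ _ N%:R) [_ * N%:R]mulrC count_unit_in_group; ring.
Qed.

Lemma assignments_nonempty : (\sum_(z : tseq) Nz z)%N = N -> exists Z, Z \in Omega.
Proof.
move=> Hs; set s := flatten [seq nseq (Nz x) x | x <- index_enum tseq].
have size_s : size s = N.
  rewrite size_flatten /shape -map_comp sumnE big_map -Hs.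
  by apply: eq_bigr => x _; rewrite /= size_nseq.
exists [ffun i : 'I_N => nth (trA, trA) s i]; rewrite inE; apply/forallP => z; apply/eqP.
transitivity (count_mem z s).
  rewrite -sum1_card -sum1_count (big_nth (trA, trA)) size_s big_mkord.
  by apply: eq_bigl => i; rewrite !inE ffunE.
rewrite count_flatten sumnE !big_map (bigD1 z) //= count_nseq /= eqxx mul1n big1 ?addn0 //.
by move=> x nxz; rewrite count_nseq /= (negbTE nxz).
Qed.

Hypothesis Nz_gt0 : forall z, (0 < Nz z)%N.
Hypothesis sum_Nz : (\sum_(z : tseq) Nz z)%N = N.

Lemma design_size_ge4 : (4 <= N)%N.
Proof.
have -> : 4%N = #|{: tseq}| by rewrite card_prod card_bool.
rewrite -sum_Nz -sum1_card.
by apply: leq_sum => z _; exact: Nz_gt0.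
Qed.

Lemma natrN_neq0 : (N%:R : R) != 0.
Proof. by rewrite pnatr_eq0 -lt0n; have := design_size_ge4; lia. Qed.

Lemma natrNpred_neq0 : ((N.-1)%:R : R) != 0.
Proof. by rewrite pnatr_eq0 -lt0n; have := design_size_ge4; lia. Qed.

Lemma natrNz_neq0 z : ((Nz z)%:R : R) != 0.
Proof. by rewrite pnatr_eq0 -lt0n; exact: Nz_gt0. Qed.

Lemma natr_card_assignments_neq0 : (#|Omega|%:R : R) != 0.
Proof.
have [Z HZ] := assignments_nonempty sum_Nz.
by rewrite pnatr_eq0 -lt0n; apply/card_gt0P; exists Z.
Qed.

Lemma Expect_sqr_sum_centered (h : 'I_N -> tseq -> R) :
  (forall z, \sum_(i < N) h i z = 0) ->
  Expect Nz (fun Z => (\sum_(i < N) h i (Z i)) ^+ 2) =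
  \sum_(i < N) (\sum_(z : tseq) (Nz z)%:R / (N.-1)%:R * h i z ^+ 2
       - (N%:R * (N.-1)%:R)^-1 * (\sum_(z : tseq) (Nz z)%:R * h i z) ^+ 2).
Proof.
move=> h_centered; have nN0 := natrN_neq0; have nN10 := natrNpred_neq0.
have nM0 := natr_card_assignments_neq0.
rewrite /Expect; under eq_bigr => Z _ do rewrite sqr_sum_ord.
rewrite exchange_big mulr_sumr; apply: eq_bigr => i _.
rewrite big_split /= exchange_big /=.
have diag : \sum_(Z in Omega) h i (Z i) ^+ 2 =
    (N%:R)^-1 * (#|Omega|%:R * \sum_(z : tseq) h i z ^+ 2 * (Nz z)%:R).
  by rewrite -(sum_assignments_unit i (fun z => h i z ^+ 2)) mulKf.
have off_diag j : j != i -> \sum_(Z in Omega) h i (Z i) * h j (Z j) =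
    (N%:R * (N.-1)%:R)^-1 * (#|Omega|%:R * \sum_(z : tseq) \sum_(z' : tseq)
      h i z * h j z' * ((Nz z)%:R * ((Nz z')%:R - (z == z')%:R))).
  move=> nji; rewrite -(@sum_assignments_pair i j (h i) (h j)) 1?eq_sym //.
  by rewrite mulrA [_ * N%:R]mulrC mulKf // mulf_neq0.
rewrite diag (eq_bigr _ off_diag) -!mulr_sumr exchange_big /=.
(* Since the contributions are centred, the units j != i contribute minus unit i. *)
have others z : \sum_(j < N | j != i) \sum_(z' : tseq)
      h i z * h j z' * ((Nz z)%:R * ((Nz z')%:R - (z == z')%:R)) =
    - \sum_(z' : tseq) h i z * h i z' * ((Nz z)%:R * ((Nz z')%:R - (z == z')%:R)).
  rewrite exchange_big -sumrN; apply: eq_bigr => z' _.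
  under eq_bigr => j _ do rewrite mulrAC.
  rewrite -mulr_sumr; have := h_centered z'.
  by rewrite (bigD1 i) //= addrC => /eqP; rewrite addr_eq0 => /eqP ->; rewrite mulrN mulrAC.
rewrite (eq_bigr _ (fun z _ => others z)) !sum_tseq /=.
have eN : (N%:R : R) = (N.-1)%:R + 1 by rewrite natr1 prednK //; have := design_size_ge4; lia.
move: nN0; rewrite eN => nN0; field.
by rewrite nM0 nN10 nN0.
Qed.

End CompleteRandomization.

Section LinearEstimators.
Variables (R : realFieldType) (N : nat) (Nz : tseq -> nat).
Hypothesis Nz_gt0 : forall z, (0 < Nz z)%N.
Hypothesis sum_Nz : (\sum_(z : tseq) Nz z)%N = N.
Variables (Y : pot_outcomes R N) (w : weights R).
Local Notation Omega := (assignments N Nz).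

Definition contrib (X : pot_outcomes R N) i z : R :=
  (w p1 z * X i p1 z + w p2 z * X i p2 z) / (Nz z)%:R.

Definition center : pot_outcomes R N := fun i t z => Y i t z - Ybar Y t z.

Lemma lin_est_contrib (X : pot_outcomes R N) Z :
  lin_est Nz X w Z = \sum_(i < N) contrib X i (Z i).
Proof.
rewrite /lin_est sum_I2 -big_split /=.
under [RHS]eq_bigr => i _ do rewrite -(sum_indicator_eq (Z i) (contrib X i)).
rewrite exchange_big /=; apply: eq_bigr => z _.
rewrite /Yhat /contrib !mulr_sumr; rewrite -big_split; apply: eq_bigr => i _.
by case: (eqVneq (Z i) z) => [->|_] /=; ring.
Qed.

Lemma Expect_lin_est :
  Expect Nz (lin_est Nz Y w) = \sum_(t < 2) \sum_(z : tseq) w t z * Ybar Y t z.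
Proof.
have nN0 := natrN_neq0 R Nz_gt0 sum_Nz.
have nM0 := natr_card_assignments_neq0 R sum_Nz.
rewrite /Expect; under eq_bigr => Z _ do rewrite lin_est_contrib.
rewrite exchange_big mulr_sumr /=.
under eq_bigr => i _ do
  rewrite -[\sum_(Z in _) _](mulKf nN0) sum_assignments_unit mulrCA mulKf //.
rewrite -mulr_sumr exchange_big mulr_sumr sum_I2 -big_split /=; apply: eq_bigr => z _.
transitivity ((N%:R)^-1 * \sum_(i < N) (w p1 z * Y i p1 z + w p2 z * Y i p2 z)).
  by congr (_ * _); apply: eq_bigr => i _; rewrite /contrib (mulfVK (natrNz_neq0 R Nz_gt0 z)).
by rewrite big_split /= -!mulr_sumr /Ybar; ring.
Qed.

Lemma Yhat_center t z Z : Z \in Omega ->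
  Yhat Nz center t z Z = Yhat Nz Y t z Z - Ybar Y t z.
Proof.
have Yhat_at_z (X : pot_outcomes R N) :
    Yhat Nz X t z Z = ((Nz z)%:R)^-1 * \sum_(i < N) X i t z * (Z i == z)%:R.
  by congr (_ * _); apply: eq_bigr => i _; case: eqP => [->|_]; rewrite ?mulr0.
move=> HZ; rewrite !Yhat_at_z /center.
under eq_bigr => i _ do rewrite mulrBl.
rewrite sumrB -mulr_sumr (sum_group_indicator R _ HZ) mulrBr mulrCA mulVf ?mulr1 //.
exact: natrNz_neq0.
Qed.

Lemma sum_center t z : \sum_(i < N) center i t z = 0.
Proof.
rewrite /center sumrB sumr_const card_ord /Ybar -mulrnAl -[_ *+ N]mulr_natl.
by rewrite mulfV ?mul1r ?subrr // (natrN_neq0 R Nz_gt0 sum_Nz).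
Qed.

Lemma Var_lin_est :
  Var Nz (lin_est Nz Y w) =
  \sum_(i < N) (\sum_(z : tseq) (Nz z)%:R / (N.-1)%:R * contrib center i z ^+ 2
       - (N%:R * (N.-1)%:R)^-1 * (\sum_(z : tseq) (Nz z)%:R * contrib center i z) ^+ 2).
Proof.
rewrite -(Expect_sqr_sum_centered Nz_gt0 sum_Nz); last first.
  by move=> z; rewrite /contrib -mulr_suml big_split /= -!mulr_sumr !sum_center !mulr0 addr0 mul0r.
rewrite /Var Expect_lin_est /Expect; congr (_ * _); apply: eq_bigr => Z HZ; congr (_ ^+ 2).
rewrite -lin_est_contrib /lin_est -sumrB; apply: eq_bigr => t _.
by rewrite -sumrB; apply: eq_bigr => z _; rewrite Yhat_center // mulrBr.
Qed.

End LinearEstimators.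

Section Identification.
Variables (R : realFieldType) (N : nat).
Implicit Types (Y : pot_outcomes R N) (w : weights R).

Lemma sum_weighted_outcomes Y w :
  assumption2_k1 Y -> assumption3_k1 Y -> constraints w ->
  forall i, \sum_(t < 2) \sum_(z : tseq) w t z * Y i t z = Y i p1 (trA, trA) - Y i p1 (trB, trA).
Proof.
move=> A2 A3 [C1 C2 C3] i; rewrite sum_I2 !sum_tseq.
have -> : Y i p1 (trA, trB) = Y i p1 (trA, trA) by apply: A2.
have -> : Y i p1 (trB, trB) = Y i p1 (trB, trA) by apply: A2.
have -> : Y i p2 (trB, trA) = Y i p2 (trA, trA) by apply: A2.
have -> : Y i p2 (trB, trB) = Y i p2 (trA, trB) by apply: A2.
have carryover := A3 i trA trB (trA, trA) (trB, trA) (trA, trA) (trA, trB) erefl erefl erefl erefl.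
have -> : Y i p2 (trA, trB) = Y i p2 (trA, trA) - (Y i p1 (trA, trA) - Y i p1 (trB, trA)) by lra.
have -> : w p1 (trB, trB) = - (w p1 (trA, trA) + w p1 (trA, trB) + w p1 (trB, trA)) by lra.
have -> : w p2 (trB, trB) = - (w p2 (trA, trA) + w p2 (trA, trB) + w p2 (trB, trA)) by lra.
have -> : w p1 (trA, trA) = 1 - (w p1 (trA, trB) + w p2 (trA, trA) + w p2 (trB, trA)) by lra.
ring.
Qed.

Lemma Ybar_eq Y t z t' z' : (forall i, Y i t z = Y i t' z') -> Ybar Y t z = Ybar Y t' z'.
Proof. by move=> eqY; rewrite /Ybar; congr (_ * _); apply: eq_bigr => i _; rewrite eqY. Qed.

Lemma S2_eq Y t z t' z' : (forall i, Y i t z = Y i t' z') -> S2 Y t z = S2 Y t' z'.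
Proof.
move=> eqY; rewrite /S2 (Ybar_eq eqY); congr (_ * _).
by apply: eq_bigr => i _; rewrite eqY.
Qed.

Lemma center_assumption2 Y : assumption2_k1 Y -> assumption2_k1 (center Y).
Proof.
move=> A2 i t z z' eq_trt; rewrite /center (A2 i t z z' eq_trt).
by rewrite (@Ybar_eq Y t z t z') // => j; apply: A2.
Qed.

Lemma center_assumption3 Y : assumption3_k1 Y -> assumption3_k1 (center Y).
Proof.
move=> A3 i a b z z' u u' za z'b ua u'b; rewrite /center.
have unit_eq := A3 i a b z z' u u' za z'b ua u'b.
have mean_eq : Ybar Y p1 z - Ybar Y p1 z' = Ybar Y p2 u - Ybar Y p2 u'.
  rewrite /Ybar -!mulrBr -!sumrB; congr (_ * _).
  by apply: eq_bigr => j _; exact: A3 za z'b ua u'b.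
lra.
Qed.

End Identification.

Section UnbiasedEstimators.
Variables (R : realFieldType) (N : nat) (Nz : tseq -> nat).
Hypothesis Nz_gt0 : forall z, (0 < Nz z)%N.
Hypothesis sum_Nz : (\sum_(z : tseq) Nz z)%N = N.
Implicit Types (Y : pot_outcomes R N) (w : weights R).

Lemma constraints_unbiased w : constraints w -> unbiased N Nz w.
Proof.
move=> Cw Y [_ A2 A3]; rewrite Expect_lin_est // /tau /Ybar -mulrBr -sumrB.
rewrite -(eq_bigr _ (fun i _ => sum_weighted_outcomes A2 A3 Cw i)).
under [in RHS]eq_bigr => i _ do rewrite sum_I2 !sum_tseq.
by rewrite sum_I2 !sum_tseq !big_split /= -!mulr_sumr; ring.
Qed.

Definition homogeneous_outcome (a b c d : R) (t : 'I_2) (z : tseq) : R :=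
  if val t == 0%N then (if trt_at z t then a else b) else (if trt_at z t then c else d).

Definition homogeneous_population (a b c d : R) : pot_outcomes R N :=
  fun _ => homogeneous_outcome a b c d.

Lemma homogeneous_population_assumptions (a b c d : R) :
  a - b = c - d -> assumptions (homogeneous_population a b c d).
Proof.
move=> effect_eq; split.
- by move=> i [z1 ?] [? ?] /= ->.
- by move=> i t z z' trt_eq; rewrite /homogeneous_population /homogeneous_outcome trt_eq.
- move=> i a' b' z z' u u' za z'b ua u'b.
  rewrite /homogeneous_population /homogeneous_outcome /trt_at /= za z'b ua u'b.
  by case: a' {za ua}; case: b' {z'b u'b}; rewrite ?subrr // -opprB effect_eq opprB.
Qed.

Lemma Ybar_homogeneous (a b c d : R) t z :
  Ybar (homogeneous_population a b c d) t z = homogeneous_outcome a b c d t z.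
Proof.
rewrite /Ybar sumr_const card_ord -[X in _ * X]mulr_natl mulrA.
by rewrite mulVf ?mul1r // (natrN_neq0 R Nz_gt0 sum_Nz).
Qed.

Lemma unbiased_constraints w : unbiased N Nz w -> constraints w.
Proof.
move=> w_unbiased.
have test a b c d : a - b = c - d ->
    \sum_(t < 2) \sum_(z : tseq) w t z * homogeneous_outcome a b c d t z = a - b.
  move=> effect_eq; have := w_unbiased _ (homogeneous_population_assumptions effect_eq).
  rewrite Expect_lin_est // /tau !Ybar_homogeneous.
  by under eq_bigr => t _ do under eq_bigr => z _ do rewrite Ybar_homogeneous.
have := test 1 0 1 0 erefl; have := test 0 1 0 1 erefl.
have := test 0 0 1 1 (etrans (subrr _) (esym (subrr _))).
rewrite !sum_I2 !sum_tseq /homogeneous_outcome /trt_at /=.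
by split; lra.
Qed.

Lemma f_obj_sum Y w : assumption2_k1 Y ->
  f_obj Nz Y w = \sum_(z : tseq)
    (w p1 z ^+ 2 * S2 Y p1 z + w p2 z ^+ 2 * S2 Y p2 z + 2 * w p1 z * w p2 z * S12 Y z)
      / (Nz z)%:R.
Proof.
move=> A2.
have S2_p1 b c : S2 Y p1 (b, c) = S2 Y p1 (b, trA) by apply: S2_eq => i; apply: A2.
have S2_p2 b c : S2 Y p2 (b, c) = S2 Y p2 (trA, c) by apply: S2_eq => i; apply: A2.
rewrite sum_tseq /f_obj !big_bool /S2_1 /S2_2 /Nr /=.
by rewrite (S2_p1 trA trB) (S2_p1 trB trB) (S2_p2 trB trA) (S2_p2 trB trB); ring.
Qed.

Lemma sum_sqr_contrib_center Y w :
  \sum_(i < N) \sum_(z : tseq) (Nz z)%:R / (N.-1)%:R * contrib Nz w (center Y) i z ^+ 2 =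
  \sum_(z : tseq)
    (w p1 z ^+ 2 * S2 Y p1 z + w p2 z ^+ 2 * S2 Y p2 z + 2 * w p1 z * w p2 z * S12 Y z)
      / (Nz z)%:R.
Proof.
have nN10 := natrNpred_neq0 R Nz_gt0 sum_Nz.
rewrite exchange_big; apply: eq_bigr => z _; have nNz := natrNz_neq0 R Nz_gt0 z.
pose k := ((Nz z)%:R * (N.-1)%:R : R)^-1.
transitivity (\sum_(i < N) (w p1 z ^+ 2 * k * (Y i p1 z - Ybar Y p1 z) ^+ 2
   + w p2 z ^+ 2 * k * (Y i p2 z - Ybar Y p2 z) ^+ 2
   + 2 * w p1 z * w p2 z * k * ((Y i p1 z - Ybar Y p1 z) * (Y i p2 z - Ybar Y p2 z)))).
  by apply: eq_bigr => i _; rewrite /contrib /center /k; field; rewrite nNz nN10.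
rewrite !big_split /= -!mulr_sumr /S2 /S12 /k; field; by rewrite nNz nN10.
Qed.

Definition effect_dispersion Y : R :=
  (N%:R * (N.-1)%:R)^-1 *
    \sum_(i < N) (center Y i p1 (trA, trA) - center Y i p1 (trB, trA)) ^+ 2.

Lemma Var_lin_est_constraints Y w : assumptions Y -> constraints w ->
  Var Nz (lin_est Nz Y w) = f_obj Nz Y w - effect_dispersion Y.
Proof.
case=> _ A2 A3 Cw; rewrite Var_lin_est // sumrB sum_sqr_contrib_center f_obj_sum //.
congr (_ - _); rewrite /effect_dispersion mulr_sumr; apply: eq_bigr => i _.
congr (_ * _ ^+ 2).
rewrite -(sum_weighted_outcomes (center_assumption2 A2) (center_assumption3 A3) Cw i).
rewrite sum_I2 -big_split; apply: eq_bigr => z _.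
by rewrite /contrib mulrC divfK ?(natrNz_neq0 R Nz_gt0).
Qed.

End UnbiasedEstimators.

Theorem proposition3 (R : realFieldType) (N : nat) (Nz : tseq -> nat)
    (Y : pot_outcomes R N) (w : weights R) :
  (forall z : tseq, (0 < Nz z)%N) ->
  (\sum_(z : tseq) Nz z)%N = N ->
  assumptions Y ->
  (BLUE Nz Y w <->
   (constraints w /\
    forall w' : weights R, constraints w' -> f_obj Nz Y w <= f_obj Nz Y w')).
Proof.
move=> Nz_gt0 sum_Nz HY.
have unbiasedE w' : unbiased N Nz w' <-> constraints w'.
  by split; [exact: unbiased_constraints | exact: constraints_unbiased].
have VarE w' : constraints w' ->
    Var Nz (lin_est Nz Y w') = f_obj Nz Y w' - effect_dispersion Y.
  exact: Var_lin_est_constraints.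
split=> [[/unbiasedE Cw w_min] | [Cw w_min]].
- split=> // w' Cw'; rewrite -(lerD2r (- effect_dispersion Y)) -!VarE //.
  by apply: w_min; apply/unbiasedE.
- split; first exact/unbiasedE.
  by move=> w' /unbiasedE Cw'; rewrite !VarE // lerD2r; apply: w_min.
Qed.
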